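(* Both the unperturbed transition probability function $P$ ($\lambda=0$) and the perturbed transition probability function $P_\lambda$ ($\lambda>0$) of the perturbed learning automata Markov chain have the weak Feller property, i.e., for every bounded continuous $f:\mathcal{Z}\to\mathbb{R}$, the functions $z\mapsto\int_{\mathcal{Z}}P(z,dy)f(y)$ and $z\mapsto\int_{\mathcal{Z}}P_\lambda(z,dy)f(y)$ are continuous on $\mathcal{Z}$.
   Context: Finite game: players $\mathcal{I}=\{1,\dots,n\}$, finite action sets $\mathcal{A}_i$, $\mathcal{A}=\prod_i\mathcal{A}_i$, utilities $u_i:\mathcal{A}\to\mathbb{R}$ with $u_i(\alpha)>0$ for all $i,\alpha$. $\mathcal{X}_i=\Delta(|\mathcal{A}_i|)$ (probability simplex, actions identified with unit vectors $e_{\alpha_i}$), $\mathcal{X}=\prod_i\mathcal{X}_i$, $\mathcal{Z}=\mathcal{A}\times\mathcal{X}$ with the product of the discrete topology on $\mathcal{A}$ and the Euclidean topology on $\mathcal{X}$. Step size $\epsilon>0$ with $0<\epsilon u_i(\alpha)<1$ for all $i,\alpha$. The chain: from $(\alpha(t),x(t))$, each agent $i$ independently selects $\alpha_i(t+1)$ according to $x_i(t)$ with probability $1-\lambda$ and uniformly on $\mathcal{A}_i$ with probability $\lambda$; then $x_i(t+1)=x_i(t)+\epsilon u_i(\alpha(t+1))(e_{\alpha_i(t+1)}-x_i(t))$. $P_\lambda$ is its transition probability function and $P$ the one for $\lambda=0$. *)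

From HB Require Import structures.
From mathcomp Require Import all_boot all_order all_algebra.
From mathcomp Require Import all_classical all_reals all_analysis.
Set Implicit Arguments. Unset Strict Implicit. Unset Printing Implicit Defensive.
Import Order.TTheory GRing.Theory Num.Theory.
Import numFieldNormedType.Exports.
Local Open Scope classical_set_scope.
Local Open Scope ring_scope.

(* Players are 'I_n; player i has the finite action set 'I_(m i).          *)
Definition profile (n : nat) (m : 'I_n -> nat) : finType :=
  {dffun forall i : 'I_n, 'I_(m i)}.

(* Mixed strategies: x i is a row vector in R^(m i) (Euclidean topology);  *)
(* the strategy space carries the (finite) product topology = Euclidean.   *)
Definition strat (R : realType) (n : nat) (m : 'I_n -> nat) : Type :=
  prod_topology (fun i : 'I_n => 'rV[R]_(m i)).

Definition state (R : realType) (n : nat) (m : 'I_n -> nat) : Type :=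
  (discrete_topology (profile m) * strat R m)%type.

Definition simplexes (R : realType) (n : nat) (m : 'I_n -> nat) : set (strat R m) :=
  [set x | forall i : 'I_n,
      (forall a : 'I_(m i), 0 <= x i 0 a) /\ \sum_(a < m i) x i 0 a = 1].

Definition Zspace (R : realType) (n : nat) (m : 'I_n -> nat) : set (state R m) :=
  [set z | simplexes z.2].

(* with prob. 1-lambda according to xi, with prob. lambda uniformly.       *)
Definition sel_prob (R : realType) (k : nat) (lambda : R) (xi : 'rV[R]_k)
  (a : 'I_k) : R :=
  (1 - lambda) * xi 0 a + lambda / k%:R.

(* Probability of the next action profile alpha' (independent agents). *)
Definition profile_prob (R : realType) (n : nat) (m : 'I_n -> nat)
  (lambda : R) (x : strat R m) (alpha' : profile m) : R :=
  \prod_(i < n) sel_prob lambda (x i) (alpha' i).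

Definition strat_update (R : realType) (n : nat) (m : 'I_n -> nat)
  (u : 'I_n -> profile m -> R) (eps : R) (x : strat R m) (alpha' : profile m)
  : strat R m :=
  fun i => x i + (eps * u i alpha') *: (delta_mx 0 (alpha' i) - x i).

(* z |-> \int_Z P_lambda(z, dy) f(y).  The measure P_lambda(z, .) is the    *)
(* finitely supported measure                                              *)
(*   sum_{alpha'} profile_prob lambda x alpha' * dirac (alpha', update),    *)
(* so the integral is (literally) the corresponding finite weighted sum.   *)
(* P is the case lambda = 0.                                               *)
Definition kernel_int (R : realType) (n : nat) (m : 'I_n -> nat)
  (u : 'I_n -> profile m -> R) (eps lambda : R) (f : state R m -> R)
  (z : state R m) : R :=
  \sum_(alpha' : profile m)
     profile_prob lambda z.2 alpha' * f (alpha', strat_update u eps z.2 alpha').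

Definition weak_feller (R : realType) (n : nat) (m : 'I_n -> nat)
  (u : 'I_n -> profile m -> R) (eps lambda : R) : Prop :=
  forall f : state R m -> R,
    {within @Zspace R n m, continuous f} ->
    (exists M : R, forall z, @Zspace R n m z -> `|f z| <= M) ->
    {within @Zspace R n m, continuous (kernel_int u eps lambda f)}.

From HB Require Import structures.
From mathcomp Require Import all_boot all_order all_algebra.
From mathcomp Require Import all_classical all_reals all_analysis.
From mathcomp Require Import lra.
Import Order.TTheory GRing.Theory Num.Theory.
Import numFieldNormedType.Exports.
Local Open Scope classical_set_scope.
Local Open Scope ring_scope.

(* The kernel P_lambda(z, .) is a finite mixture of Dirac masses: the next
   profile b is drawn with a probability that is polynomial in the strategy
   x, and then moves to the state (b, x + eps u(b) (e_b - x)), which depends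
   continuously on x and stays in the product of simplices.  Hence
   z |-> \int P_lambda(z, dy) f(y) is a finite sum of products of continuous
   functions on Z, for every lambda. *)

Lemma continuous_prod_topology {T : topologicalType} {I : Type}
    {K : I -> topologicalType} (g : T -> prod_topology K) :
  (forall i, continuous (fun t => g t i)) -> continuous g.
Proof.
move=> gi t; apply/cvg_sup => i U [_ /= [[W oW <-]]] /= Wgt /filterS; apply.
by apply: gi; exact: open_nbhs_nbhs.
Qed.

Lemma continuous_within_comp {T S U : topologicalType} {A : set T} {B : set S}
    {h : T -> S} {f : S -> U} :
  continuous h -> (forall t, A t -> B (h t)) ->
  {within B, continuous f} -> {within A, continuous (f \o h)}.
Proof.
move=> hc hAB /subspace_continuousP fc; apply/subspace_continuousP => t At.
apply: cvg_comp (fc _ (hAB _ At)) => W BW.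
have : nbhs t (h @^-1` (fun y => B y -> W y)) by exact: hc.
by apply: filterS => x /= BWhx Ax; exact/BWhx/hAB.
Qed.

Section strategy_update.
Context {R : realType} {n : nat} {m : 'I_n -> nat}.

Lemma strat_proj_continuous (i : 'I_n) :
  continuous (fun x : strat R m => x i).
Proof. exact: (@proj_continuous _ (fun i => 'rV[R]_(m i))). Qed.

Lemma strat_coord_continuous (i : 'I_n) (a : 'I_(m i)) :
  continuous (fun x : strat R m => x i 0 a).
Proof.
move=> x; apply: (@continuous_comp _ _ _ (fun x : strat R m => x i)
  (fun M : 'rV[R]_(m i) => M 0 a)); last exact: coord_continuous.
exact: strat_proj_continuous.
Qed.

Lemma profile_prob_continuous (lambda : R) (b : profile m) :
  continuous (fun x : strat R m => profile_prob lambda x b).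
Proof.
apply: (@continuous_big R^o _ *%R 1 xpredT mul_continuous) => i _ x.
apply: (cvgD (FF := nbhs_filter x)); last exact: cvg_cst.
by apply: cvgMr; exact: strat_coord_continuous.
Qed.

Variables (u : 'I_n -> profile m -> R) (eps : R).

Lemma strat_update_continuous (b : profile m) :
  continuous (fun x : strat R m => strat_update u eps x b).
Proof.
apply: continuous_prod_topology => i x; rewrite /strat_update.
apply: (cvgD (FF := nbhs_filter x)); first exact: strat_proj_continuous.
apply: cvgZr; apply: cvgB; [exact: cvg_cst | exact: strat_proj_continuous].
Qed.

Lemma strat_update_simplexes (b : profile m) (x : strat R m) :
  (forall i, 0 <= eps * u i b <= 1) ->
  simplexes x -> simplexes (strat_update u eps x b).
Proof.
move=> step01 simplex_x i; have [x_ge0 x_sum1] := simplex_x i.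
have /andP[c_ge0 c_le1] := step01 i; rewrite /strat_update; split.
  move=> a; rewrite !mxE; set e := _%:R.
  have e_ge0 : 0 <= e by rewrite ler0n.
  by have := x_ge0 a; nra.
under eq_bigr do rewrite !mxE.
rewrite big_split /= -big_distrr /= big_split /= sumrN x_sum1.
rewrite (bigD1 (b i)) //= eqxx big1 ?addr0 ?subrr ?mulr0 ?addr0 //.
by move=> a /negbTE; rewrite eq_sym => ->.
Qed.

Lemma weak_feller_step_in01 (lambda : R) :
  (forall i b, 0 <= eps * u i b <= 1) -> weak_feller u eps lambda.
Proof.
move=> step01 f fc _.
pose next (b : profile m) (z : state R m) : state R m :=
  (b, strat_update u eps z.2 b).
have prob_continuous b :
    continuous (fun z : state R m => profile_prob lambda z.2 b).
  move=> z; apply: (@continuous_comp _ _ _ snd (profile_prob lambda ^~ b)).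
    exact: cvg_snd.
  exact: profile_prob_continuous.
have next_continuous b : continuous (next b).
  move=> z; apply: (@cvg_pair _ _ _ _ (nbhs (b : discrete_topology (profile m)))
    (nbhs (strat_update u eps z.2 b : strat R m))); first exact: cvg_cst.
  apply: (@continuous_comp _ _ _ snd (strat_update u eps ^~ b)).
    exact: cvg_snd.
  exact: strat_update_continuous.
have next_Zspace b z : Zspace z -> Zspace (next b z).
  exact: strat_update_simplexes.
rewrite /from_subspace /kernel_int.
apply: (@continuous_big R^o _ +%R 0 xpredT add_continuous) => b _ z.
apply: continuousM; first exact: (continuous_subspaceT (prob_continuous b)).
exact: (continuous_within_comp (next_continuous b) (next_Zspace b) fc z).
Qed.

End strategy_update.

Theorem proposition3p1 (R : realType) (n : nat) (m : 'I_n -> nat)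
  (u : 'I_n -> profile m -> R) (eps : R) :
  (forall i : 'I_n, (0 < m i)%N) ->
  (forall (i : 'I_n) (alpha : profile m), 0 < u i alpha) ->
  0 < eps ->
  (forall (i : 'I_n) (alpha : profile m), 0 < eps * u i alpha < 1) ->
  weak_feller u eps 0 /\
  (forall lambda : R, 0 < lambda <= 1 -> weak_feller u eps lambda).
Proof.
move=> _ _ _ step01.
have step01' i b : 0 <= eps * u i b <= 1.
  by have /andP[? ?] := step01 i b; apply/andP; split; exact: ltW.
by split=> [|lambda _]; exact: weak_feller_step_in01.
Qed.
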